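(* Let $\bm{X}\in\mathbb{R}^{d\times n}$, $1\le K\le\min\{n,d\}$, $h(\bm{P},\bm{Q})=-\langle\bm{P},\bm{X}^T\bm{Q}\rangle+\delta_{\mathcal{B}(n,K)}(\bm{P})+\delta_{{\rm St}(d,K)}(\bm{Q})$, and for $\beta\ge0$ let $\Psi_\beta(\bm{P},\bm{Q},\bm{Q}')=h(\bm{P},\bm{Q})+\frac\beta2\|\bm{Q}-\bm{Q}'\|_F^2$. Let $\{(\bm{P}^k,\bm{Q}^k)\}_{k\ge0}$ be generated by the following algorithm: start from $\bm{P}^0\in\mathcal{B}(n,K)$, $\bm{Q}^{-1}=\bm{Q}^0\in{\rm St}(d,K)$; for $k\ge0$ set $\bm{E}^k=\bm{Q}^k+\gamma_k(\bm{Q}^k-\bm{Q}^{k-1})$, pick $\bm{P}^{k+1}\in\operatorname{sign}(\bm{P}^k+\bm{X}^T\bm{E}^k/\alpha_k)$, compute a thin SVD $\bm{Q}^k+\bm{X}\bm{P}^{k+1}/\beta_k=\bm{U}^{k+1}\bm{\Sigma}^{k+1}(\bm{V}^{k+1})^T$ and set $\bm{Q}^{k+1}=\bm{U}^{k+1}(\bm{V}^{k+1})^T$. Suppose $\alpha_*\le\alpha_k\le\alpha^*$, $3\beta_*/2\le\beta_k\le\beta^*$ for some $\alpha_*,\alpha^*,\beta_*,\beta^*\in(0,+\infty)$, and $0\le\gamma_k<\gamma^*=\min\{1,\alpha_*\beta_*/(2\|\bm{X}\|^2)\}$ for all $k$. Let $\bm{C}^k=(\bm{P}^k,\bm{Q}^k,\bm{Q}^{k-1})$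 for $k\ge0$. Then: (a) $\{\bm{C}^k\}_{k\ge0}$ is bounded; (b) there is $\kappa_1>0$ such that $\Psi_{\beta_*}(\bm{C}^{k+1})-\Psi_{\beta_*}(\bm{C}^k)\le-\kappa_1\|\bm{C}^{k+1}-\bm{C}^k\|_F^2$ for all $k\ge0$; (c) there is $\kappa_2>0$ such that $\operatorname{dist}(\bm{0},\partial\Psi_{\beta_*}(\bm{C}^{k+1}))\le\kappa_2\|\bm{C}^{k+1}-\bm{C}^k\|_F$ for all $k\ge0$.
   Context: ${\rm St}(d,K)=\{\bm{Q}\in\mathbb{R}^{d\times K}:\bm{Q}^T\bm{Q}=\bm{I}_K\}$; $\mathcal{B}(n,K)$ is the set of $n\times K$ matrices with entries in $\{\pm1\}$; $\langle\bm{A},\bm{B}\rangle=\operatorname{tr}(\bm{A}^T\bm{B})$; $\delta_{\mathcal{S}}$ is the indicator function of $\mathcal{S}$; $\|\bm{X}\|$ is the spectral norm. $\operatorname{sign}(a)=\{a/|a|\}$ for $a\ne0$, $\operatorname{sign}(0)=\{-1,1\}$, applied entrywise to matrices. For a triple, $\|(\bm{P},\bm{Q},\bm{Q}')\|_F^2=\|\bm{P}\|_F^2+\|\bm{Q}\|_F^2+\|\bm{Q}'\|_F^2$. $\partial$ is the limiting subdifferential and $\operatorname{dist}(\bm{0},S)=\inf_{\bm{s}\in S}\|\bm{s}\|_F$. *)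

From HB Require Import structures.
From mathcomp Require Import all_boot all_order all_algebra.
From mathcomp Require Import boolp classical_sets reals constructive_ereal ereal.
Set Implicit Arguments. Unset Strict Implicit. Unset Printing Implicit Defensive.
Import Order.TTheory GRing.Theory Num.Theory.
Local Open Scope ring_scope.
Local Open Scope classical_set_scope.

Section Defs.
Context {R : realType}.

Definition fro2 {m p : nat} (A : 'M[R]_(m, p)) : R :=
  \sum_(i < m) \sum_(j < p) A i j ^+ 2.
Definition fro {m p : nat} (A : 'M[R]_(m, p)) : R := Num.sqrt (fro2 A).
Definition minner {m p : nat} (A B : 'M[R]_(m, p)) : R := \tr (A^T *m B).

Definition specnorm {m p : nat} (X : 'M[R]_(m, p)) : R :=
  sup [set r | exists v : 'cV[R]_p, fro v = 1 /\ r = fro (X *m v)].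

Definition stiefel {d K : nat} (Q : 'M[R]_(d, K)) : Prop := Q^T *m Q = 1%:M.
Definition binmx {n K : nat} (P : 'M[R]_(n, K)) : Prop :=
  forall i j, P i j = 1 \/ P i j = -1.

Definition in_sign (a b : R) : Prop :=
  if a != 0 then b = a / `|a| else (b = 1 \/ b = -1).

Definition thin_svd {d K : nat} (M U : 'M[R]_(d, K)) (S V : 'M[R]_K) : Prop :=
  stiefel U /\
  (forall i j, i != j -> S i j = 0) /\
  (forall i, 0 <= S i i) /\
  (forall i j : 'I_K, (i <= j)%N -> S j j <= S i i) /\
  V^T *m V = 1%:M /\ M = U *m S *m V^T.

Definition trip (n d K : nat) : Type :=
  ('M[R]_(n, K) * 'M[R]_(d, K) * 'M[R]_(d, K))%type.

Definition tsub {n d K : nat} (a b : trip n d K) : trip n d K :=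
  ((a.1.1 - b.1.1, a.1.2 - b.1.2), a.2 - b.2).
Definition tinner {n d K : nat} (a b : trip n d K) : R :=
  minner a.1.1 b.1.1 + minner a.1.2 b.1.2 + minner a.2 b.2.
Definition tnorm {n d K : nat} (a : trip n d K) : R :=
  Num.sqrt (fro2 a.1.1 + fro2 a.1.2 + fro2 a.2).

Definition tcvg {n d K : nat} (xs : nat -> trip n d K) (x : trip n d K) : Prop :=
  forall eps : R, 0 < eps -> exists N, forall k, (N <= k)%N -> tnorm (tsub (xs k) x) < eps.
Definition rcvg (u : nat -> R) (l : R) : Prop :=
  forall eps : R, 0 < eps -> exists N, forall k, (N <= k)%N -> `|u k - l| < eps.

Definition frechet {n d K : nat} (f : trip n d K -> \bar R) (x v : trip n d K) : Prop :=
  f x \is a fin_num /\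
  forall eps : R, 0 < eps -> exists delta : R, 0 < delta /\
    forall y, tnorm (tsub y x) < delta ->
      (f x + (tinner v (tsub y x) - eps * tnorm (tsub y x))%:E <= f y)%E.

Definition lsubdiff {n d K : nat} (f : trip n d K -> \bar R) (x : trip n d K)
    : set (trip n d K) :=
  [set v | f x \is a fin_num /\
    exists xs vs : nat -> trip n d K,
      [/\ forall k, frechet f (xs k) (vs k), tcvg xs x,
          rcvg (fun k => fine (f (xs k))) (fine (f x)) & tcvg vs v]].

(* dist(0, S) = inf_{s in S} ||s||_F  (= +oo when S is empty) *)
Definition dist0 {n d K : nat} (S : set (trip n d K)) : \bar R :=
  ereal_inf [set (tnorm s)%:E | s in S].

Definition Psi {n d K : nat} (X : 'M[R]_(d, n)) (beta : R) (c : trip n d K) : \bar R :=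
  if `[< binmx c.1.1 /\ stiefel c.1.2 >] then
    (- minner c.1.1 (X^T *m c.1.2) + beta / 2 * fro2 (c.1.2 - c.2))%:E
  else +oo%E.

(* gamma^* = min{1, alpha_* beta_* / (2 ||X||^2)}, with the convention that the
   second term is +oo when X = 0 *)
Definition gamma_star {d n : nat} (X : 'M[R]_(d, n)) (alo blo : R) : R :=
  if specnorm X == 0 then 1 else Num.min 1 (alo * blo / (2 * specnorm X ^+ 2)).

Definition Qprev {d K : nat} (Q : nat -> 'M[R]_(d, K)) (k : nat) : 'M[R]_(d, K) :=
  if k is k'.+1 then Q k' else Q 0%N.

Definition Citer {n d K : nat} (P : nat -> 'M[R]_(n, K)) (Q : nat -> 'M[R]_(d, K))
    (k : nat) : trip n d K := ((P k, Q k), Qprev Q k).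

End Defs.

From HB Require Import structures.
From mathcomp Require Import all_boot all_order all_algebra.
From mathcomp Require Import boolp classical_sets reals constructive_ereal ereal.
From mathcomp Require Import ring lra.
Import Order.TTheory GRing.Theory Num.Theory.
Local Open Scope ring_scope.

(* Both updates maximize a linear functional over a set of matrices of constant
   Frobenius norm: the sign step over B(n,K), the polar factor U V^T over
   St(d,K).  On such a set, maximizing <Z, Z0 + G/a> forces
   a/2 |Z1 - Z0|^2 <= <Z1 - Z0, G>.  Adding the P- and Q-inequalities, the
   extrapolation term gamma <P1 - P0, X^T (Q0 - Q_)> is absorbed by Young's
   inequality because gamma^2 |X|^2 <= alpha_* beta_* / 2; what remains is the
   decrease of Psi.  For (c), P is locally constant on B(n,K), and the
   maximality of the polar factor makes
   (0, (beta_* - beta_k) (Q1 - Q0), - beta_* (Q1 - Q0)) a Frechet, hence a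
   limiting, subgradient of Psi at the new iterate. *)

Section FrobeniusInner.
Context {R : realType} {m p : nat}.
Implicit Types A B C : 'M[R]_(m, p).

Lemma minnerE A B : minner A B = \sum_(i < m) \sum_(j < p) A i j * B i j.
Proof.
rewrite /minner /mxtrace exchange_big /=; apply: eq_bigr => j _.
by rewrite !mxE; apply: eq_bigr => i _; rewrite mxE.
Qed.

Lemma fro2_minner A : fro2 A = minner A A.
Proof.
by rewrite minnerE; apply: eq_bigr => i _; apply: eq_bigr => j _; rewrite expr2.
Qed.

Lemma minnerC A B : minner A B = minner B A.
Proof.
by rewrite !minnerE; apply: eq_bigr => i _; apply: eq_bigr => j _; rewrite mulrC.
Qed.

Lemma minnerDl A B C : minner (A + B) C = minner A C + minner B C.
Proof.
rewrite !minnerE -big_split /=; apply: eq_bigr => i _; rewrite -big_split /=.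
by apply: eq_bigr => j _; rewrite !mxE mulrDl.
Qed.

Lemma minnerZl a A C : minner (a *: A) C = a * minner A C.
Proof.
rewrite !minnerE mulr_sumr; apply: eq_bigr => i _; rewrite mulr_sumr.
by apply: eq_bigr => j _; rewrite !mxE mulrA.
Qed.

Lemma minnerBl A B C : minner (A - B) C = minner A C - minner B C.
Proof. by rewrite minnerDl -scaleN1r minnerZl mulN1r. Qed.

Lemma minnerDr A B C : minner C (A + B) = minner C A + minner C B.
Proof. by rewrite minnerC minnerDl !(minnerC C). Qed.

Lemma minnerZr a A C : minner C (a *: A) = a * minner C A.
Proof. by rewrite minnerC minnerZl minnerC. Qed.

Lemma minnerBr A B C : minner C (A - B) = minner C A - minner C B.
Proof. by rewrite minnerC minnerBl !(minnerC C). Qed.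

Lemma minner0l C : minner 0 C = 0.
Proof. by rewrite -(scale0r 0) minnerZl mul0r. Qed.

Lemma fro2_ge0 A : 0 <= fro2 A.
Proof. by apply: sumr_ge0 => i _; apply: sumr_ge0 => j _; apply: sqr_ge0. Qed.

Lemma sqr_entry_le_fro2 A i j : A i j ^+ 2 <= fro2 A.
Proof.
rewrite /fro2 (bigD1 i) //= (bigD1 j) //= -addrA lerDl.
apply: addr_ge0; first by apply: sumr_ge0 => ? _; apply: sqr_ge0.
by apply: sumr_ge0 => ? _; apply: sumr_ge0 => ? _; apply: sqr_ge0.
Qed.

Lemma fro2_eq0 {A} : fro2 A = 0 -> A = 0.
Proof.
move=> A0; apply/matrixP => i j; rewrite mxE; apply/eqP.
by rewrite -sqrf_eq0 eq_le sqr_ge0 andbT -A0 sqr_entry_le_fro2.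
Qed.

Lemma fro2Z a A : fro2 (a *: A) = a ^+ 2 * fro2 A.
Proof. by rewrite !fro2_minner minnerZl minnerZr mulrA expr2. Qed.

Lemma fro2D A B : fro2 (A + B) = fro2 A + 2 * minner A B + fro2 B.
Proof. rewrite !fro2_minner minnerDl !minnerDr (minnerC B A); ring. Qed.

Lemma fro2B A B : fro2 (A - B) = fro2 A - 2 * minner A B + fro2 B.
Proof. rewrite !fro2_minner minnerBl !minnerBr (minnerC B A); ring. Qed.

Lemma minner_sub_sphere A B :
  fro2 A = fro2 B -> minner (B - A) A = - fro2 (B - A) / 2.
Proof.
by move=> AB; rewrite fro2B minnerBl (minnerC B A) -AB -fro2_minner; field.
Qed.

Lemma minner_young (t a b : R) A B : 0 <= a -> 0 <= b -> t ^+ 2 <= a * b ->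
  2 * t * minner A B <= a * fro2 A + b * fro2 B.
Proof.
move=> a_ge0 b_ge0 tab; rewrite minnerE /fro2 !mulr_sumr -big_split /=.
apply: ler_sum => i _; rewrite !mulr_sumr -big_split /=; apply: ler_sum => j _.
have [a0|a_neq0] := eqVneq a 0.
  have t0 : t = 0 by apply/eqP; rewrite -sqrf_eq0 eq_le sqr_ge0 -(mul0r b) -a0 tab.
  by rewrite t0 a0 mulr0 !mul0r add0r; apply: mulr_ge0 => //; apply: sqr_ge0.
have a_gt0 : 0 < a by rewrite lt_def a_neq0.
have := sqr_ge0 (a * A i j - t * B i j).
have : 0 <= (a * b - t ^+ 2) * B i j ^+ 2 by apply: mulr_ge0; [lra|apply: sqr_ge0].
rewrite -(ler_pM2l a_gt0); nra.
Qed.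

End FrobeniusInner.

Lemma fro2_col {R : realType} {m p : nat} (A : 'M[R]_(m, p)) : fro2 A = \sum_(j < p) fro2 (col j A).
Proof.
rewrite /fro2 exchange_big /=; apply: eq_bigr => j _.
by apply: eq_bigr => i _; rewrite big_ord1 mxE.
Qed.

Lemma minner_col {R : realType} {m p : nat} (A B : 'M[R]_(m, p)) j : minner (col j A) (col j B) = (A^T *m B) j j.
Proof. by rewrite minnerE mxE; apply: eq_bigr => i _; rewrite big_ord1 !mxE. Qed.

Lemma minner_adjoint {R : realType} {d n K : nat} (X : 'M[R]_(d, n))
    (A : 'M[R]_(n, K)) (B : 'M[R]_(d, K)) :
  minner A (X^T *m B) = minner (X *m A) B.
Proof. by rewrite /minner trmx_mul mulmxA. Qed.

Lemma maximizer_sufficient_increase {R : realType} {m p : nat} {a : R}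
    {Z0 Z1 G : 'M[R]_(m, p)} :
  0 < a -> fro2 Z0 = fro2 Z1 ->
  minner Z0 (Z0 + a^-1 *: G) <= minner Z1 (Z0 + a^-1 *: G) ->
  a / 2 * fro2 (Z1 - Z0) <= minner (Z1 - Z0) G.
Proof.
move=> a_gt0 Z01; rewrite -subr_ge0 -minnerBl minnerDr minnerZr.
rewrite minner_sub_sphere // => incr.
by have := mulr_ge0 (ltW a_gt0) incr; rewrite mulrDr mulVKf ?gt_eqF //; lra.
Qed.

Section SignStep.
Context {R : realType} {n K : nat}.
Implicit Types A B M : 'M[R]_(n, K).

Lemma in_sign_maximizes {a b s : R} : in_sign a b -> (s = 1 \/ s = -1) ->
  (b = 1 \/ b = -1) /\ s * a <= b * a.
Proof.
rewrite /in_sign => + s_pm1; case: ifPn => [a_neq0 ->|]; last first.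
  by rewrite negbK => /eqP-> b_pm1; rewrite !mulr0.
have [a_gt0|a_le0] := ltP 0 a.
  by rewrite gtr0_norm // divff ?gt_eqF //; split; [left|case: s_pm1 => ->; lra].
have a_lt0 : a < 0 by rewrite lt_neqAle a_neq0.
rewrite ltr0_norm // invrN mulrN divff ?lt_eqF //.
by split; [right|case: s_pm1 => ->; lra].
Qed.

Lemma binmx_fro2 A : binmx A -> fro2 A = (n * K)%:R.
Proof.
move=> A_bin; rewrite /fro2 (eq_bigr (fun=> K%:R)) ?sumr_const ?card_ord.
  by rewrite mulnC mulrnA.
move=> i _; rewrite (eq_bigr (fun=> 1)) ?sumr_const ?card_ord //.
by move=> j _; case: (A_bin i j) => ->; rewrite ?sqrrN expr1n.
Qed.

Lemma sign_maximizes {A B M} : binmx A -> (forall i j, in_sign (M i j) (B i j)) ->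
  binmx B /\ minner A M <= minner B M.
Proof.
move=> A_bin B_sign; split.
  by move=> i j; have [] := in_sign_maximizes (B_sign i j) (A_bin i j).
rewrite !minnerE; apply: ler_sum => i _; apply: ler_sum => j _.
by have [] := in_sign_maximizes (B_sign i j) (A_bin i j).
Qed.

Lemma binmx_locally_constant A B :
  binmx A -> binmx B -> fro2 (A - B) < 1 -> A = B.
Proof.
move=> A_bin B_bin AB; apply/matrixP => i j; apply/eqP/negPn/negP => neqAB.
have := le_lt_trans (sqr_entry_le_fro2 (A - B) i j) AB; rewrite !mxE.
by move: neqAB; case: (A_bin i j) => ->; case: (B_bin i j) => -> //; lra.
Qed.

End SignStep.

Section PolarStep.
Context {R : realType} {d K : nat}.
Implicit Types (M Q U Y : 'M[R]_(d, K)) (S V : 'M[R]_K).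

Lemma stiefel_fro2 Q : stiefel Q -> fro2 Q = K%:R.
Proof. by move=> Q_st; rewrite fro2_minner /minner Q_st mxtrace1. Qed.

Lemma stiefel_polar {U V} : stiefel U -> V^T *m V = 1%:M -> stiefel (U *m V^T).
Proof.
move=> U_st V_orth; rewrite /stiefel trmx_mul trmxK mulmxA -(mulmxA V) U_st.
by rewrite mulmx1; apply: mulmx1C.
Qed.

Lemma minner_stiefel_svd_le_trace Q U S V :
  stiefel Q -> stiefel U -> V^T *m V = 1%:M ->
  (forall i j, i != j -> S i j = 0) -> (forall i, 0 <= S i i) ->
  minner Q (U *m S *m V^T) <= \tr S.
Proof.
move=> Q_st U_st V_orth S_diag S_ge0.
have -> : minner Q (U *m S *m V^T) = \tr (((Q *m V)^T *m U) *m S).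
  by rewrite /minner !mulmxA mxtrace_mulC !mulmxA trmx_mul.
rewrite /mxtrace; apply: ler_sum => i _.
rewrite mxE (bigD1 i) //= big1 ?addr0; last first.
  by move=> j ji; rewrite S_diag ?mulr0 // eq_sym.
rewrite -{2}(mul1r (S i i)); apply: ler_wpM2r => //.
have unit_QV : fro2 (col i (Q *m V)) = 1.
  rewrite fro2_minner minner_col trmx_mul mulmxA -(mulmxA V^T) Q_st mulmx1.
  by rewrite V_orth mxE eqxx.
have unit_U : fro2 (col i U) = 1 by rewrite fro2_minner minner_col U_st mxE eqxx.
have := @minner_young _ _ _ 1 1 1 (col i (Q *m V)) (col i U) ler01 ler01.
by rewrite minner_col unit_QV unit_U expr1n !mulr1; lra.
Qed.

Lemma polar_maximizes {M U S V Q} : thin_svd M U S V -> stiefel Q ->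
  minner Q M <= minner (U *m V^T) M.
Proof.
move=> [U_st [S_diag [S_ge0 [_ [V_orth ->]]]]] Q_st.
have -> : minner (U *m V^T) (U *m S *m V^T) = \tr S.
  rewrite /minner trmx_mul trmxK !mulmxA -(mulmxA V) U_st mulmx1.
  by rewrite mxtrace_mulC mulmxA V_orth mul1mx.
exact: minner_stiefel_svd_le_trace.
Qed.

Lemma stiefel_prox_normal {M U S V Y} : thin_svd M U S V -> stiefel Y ->
  minner (Y - U *m V^T) (M - U *m V^T) <= fro2 (Y - U *m V^T) / 2.
Proof.
move=> svdM Y_st; have [U_st [_ [_ [_ [V_orth _]]]]] := svdM.
have polar_st := stiefel_polar U_st V_orth.
rewrite minnerBr minner_sub_sphere; last by rewrite !stiefel_fro2.
rewrite minnerBl.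
have := polar_maximizes svdM Y_st; lra.
Qed.

End PolarStep.

Section SpectralNorm.
Context {R : realType} {d n : nat}.
Variable X : 'M[R]_(d, n).
Hypothesis n_gt0 : (0 < n)%N.

Lemma has_sup_specnorm :
  has_sup [set r | exists v : 'cV[R]_n, fro v = 1 /\ r = fro (X *m v)].
Proof.
split.
  pose e : 'cV[R]_n := delta_mx (Ordinal n_gt0) 0.
  exists (fro (X *m e)), e; split => //.
  rewrite /fro /fro2 (bigD1 (Ordinal n_gt0)) //= big_ord1 big1 ?addr0.
    by rewrite mxE !eqxx expr1n sqrtr1.
  by move=> j j0; rewrite big_ord1 mxE (negbTE j0) /= expr0n.
exists (Num.sqrt (\sum_(i < d) \sum_(j < 1) (\sum_(k < n) `|X i k|) ^+ 2)).
move=> r [v [v1 ->]]; rewrite /fro ler_sqrt; last first.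
  by apply: sumr_ge0 => ? _; apply: sumr_ge0 => ? _; apply: sqr_ge0.
have v_entry k j : `|v k j| <= 1.
  rewrite -(expr_le1 (n := 2)) // real_normK ?num_real //.
  by rewrite -(expr1n _ 2) -v1 /fro sqr_sqrtr ?fro2_ge0 // sqr_entry_le_fro2.
apply: ler_sum => i _; apply: ler_sum => j _; rewrite mxE.
rewrite -real_normK ?num_real //; apply: lerXn2r.
- by rewrite nnegrE.
- by rewrite nnegrE sumr_ge0.
apply: le_trans (ler_norm_sum _ _ _) _; apply: ler_sum => k _.
by rewrite normrM ler_piMr.
Qed.

Lemma specnorm_ge0 : 0 <= specnorm X.
Proof.
have [[r [v [v1 rE]]] _] := has_sup_specnorm.
apply: le_trans (sup_upper_bound has_sup_specnorm (ex_intro _ v (conj v1 rE))).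
by rewrite rE sqrtr_ge0.
Qed.

Lemma fro2_mulmx_col_le (v : 'cV[R]_n) :
  fro2 (X *m v) <= specnorm X ^+ 2 * fro2 v.
Proof.
have [v0|v_neq0] := eqVneq (fro2 v) 0.
  by rewrite (fro2_eq0 v0) mulmx0 !fro2_minner !minner0l mulr0.
have fro_gt0 : 0 < fro v by rewrite sqrtr_gt0 lt_def v_neq0 fro2_ge0.
pose w := (fro v)^-1 *: v.
have w1 : fro w = 1.
  rewrite /fro fro2Z exprVn -(sqr_sqrtr (fro2_ge0 v)) mulVf ?sqrtr1 //.
  by rewrite expf_neq0 // gt_eqF.
have Xw : fro2 (X *m w) <= specnorm X ^+ 2.
  rewrite -(sqr_sqrtr (fro2_ge0 _)) lerXn2r ?nnegrE ?sqrtr_ge0 ?specnorm_ge0 //.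
  exact: (sup_upper_bound has_sup_specnorm (ex_intro _ w (conj w1 erefl))).
move: Xw; rewrite -scalemxAr fro2Z exprVn mulrC ler_pdivrMr ?exprn_gt0 //.
by rewrite /fro sqr_sqrtr ?fro2_ge0.
Qed.

Lemma fro2_mulmx_le {K : nat} (A : 'M[R]_(n, K)) :
  fro2 (X *m A) <= specnorm X ^+ 2 * fro2 A.
Proof.
rewrite !fro2_col mulr_sumr; apply: ler_sum => j _.
by rewrite !colE -mulmxA; apply: fro2_mulmx_col_le.
Qed.

Lemma gamma_star_sqr_le {alo blo g : R} :
  0 < alo -> 0 < blo -> 0 <= g < gamma_star X alo blo ->
  g ^+ 2 * specnorm X ^+ 2 <= alo * blo / 2.
Proof.
move=> alo_gt0 blo_gt0 /andP[g_ge0]; rewrite /gamma_star.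
have X_ge0 := specnorm_ge0.
case: eqP => [->|X_neq0]; first by move=> _; nra.
rewrite lt_min => /andP[g_lt1].
have X_gt0 : 0 < specnorm X by rewrite lt_def X_ge0 andbT; apply/eqP.
rewrite ltr_pdivlMr ?mulr_gt0 ?exprn_gt0 // => g_lt.
have : g ^+ 2 * specnorm X ^+ 2 <= g * specnorm X ^+ 2.
  by apply: ler_wpM2r; [rewrite ltW ?exprn_gt0 | rewrite expr2 ler_piMr // ltW].
nra.
Qed.

Lemma inertial_cross_le {K : nat} (A : 'M[R]_(n, K)) (D : 'M[R]_(d, K))
    {alo blo g : R} :
  0 < alo -> 0 < blo -> 0 <= g -> g ^+ 2 * specnorm X ^+ 2 <= alo * blo / 2 ->
  g * minner A (X^T *m D) <= 3 * alo / 8 * fro2 A + blo / 3 * fro2 D.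
Proof.
move=> alo_gt0 blo_gt0 g_ge0 g_le; rewrite minner_adjoint.
pose a := 3 * g ^+ 2 / (2 * blo).
have a_ge0 : 0 <= a by rewrite divr_ge0 ?mulr_ge0 ?sqr_ge0 // ltW.
have ga : g ^+ 2 = a * (2 * blo / 3) by rewrite /a; field; rewrite gt_eqF.
have young : 2 * g * minner (X *m A) D <= a * fro2 (X *m A) + 2 * blo / 3 * fro2 D.
  by apply: minner_young; rewrite // -?ga // divr_ge0 // mulr_ge0 // ltW.
have aX : a * specnorm X ^+ 2 <= 3 * alo / 4.
  by rewrite /a mulrAC ler_pdivrMr ?mulr_gt0 //; nra.
have XA : a * fro2 (X *m A) <= a * specnorm X ^+ 2 * fro2 A.
  by rewrite -mulrA ler_wpM2l // fro2_mulmx_le.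
have := ler_wpM2r (fro2_ge0 A) aX; lra.
Qed.

End SpectralNorm.

Section Triples.
Context {R : realType} {n d K : nat}.
Implicit Types (a v x : @trip R n d K) (f : @trip R n d K -> \bar R).

Lemma tnorm_sqr a : tnorm a ^+ 2 = fro2 a.1.1 + fro2 a.1.2 + fro2 a.2.
Proof. by rewrite /tnorm sqr_sqrtr // !addr_ge0 // fro2_ge0. Qed.

Lemma tnorm_subxx a : tnorm (tsub a a) = 0.
Proof. by rewrite /tnorm /tsub /= !subrr !fro2_minner !minner0l !addr0 sqrtr0. Qed.

Lemma frechet_lsubdiff f x v : frechet f x v -> lsubdiff f x v.
Proof.
move=> fv; split; first by case: fv.
exists (fun=> x), (fun=> v); split => // [e e_gt0|e e_gt0|e e_gt0]; exists 0%N => k _.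
- by rewrite tnorm_subxx.
- by rewrite subrr normr0.
- by rewrite tnorm_subxx.
Qed.

Lemma dist0_le (S : set (@trip R n d K)) v : S v -> (dist0 S <= (tnorm v)%:E)%E.
Proof. by move=> Sv; apply: ereal_inf_lbound; exists v. Qed.

End Triples.

Lemma Psi_feasible {R : realType} {n d K : nat} (X : 'M[R]_(d, n)) (b : R)
    (P : 'M[R]_(n, K)) (Q Q' : 'M[R]_(d, K)) :
  binmx P -> stiefel Q ->
  Psi X b ((P, Q), Q') = (- minner P (X^T *m Q) + b / 2 * fro2 (Q - Q'))%:E.
Proof. by move=> P_bin Q_st; rewrite /Psi asboolT. Qed.

Lemma Psi_frechet_polar_step {R : realType} {n d K : nat} (X : 'M[R]_(d, n))
    {blo b : R} {P1 : 'M[R]_(n, K)} {Q0 Q1 U : 'M[R]_(d, K)} {S V : 'M[R]_K} :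
  0 <= blo -> 0 < b -> binmx P1 ->
  thin_svd (Q0 + b^-1 *: (X *m P1)) U S V -> Q1 = U *m V^T ->
  frechet (Psi X blo) ((P1, Q1), Q0)
    ((0, (blo - b) *: (Q1 - Q0)), (- blo) *: (Q1 - Q0)).
Proof.
move=> blo_ge0 b_gt0 P1_bin svdM Q1E.
set M := Q0 + _ in svdM.
have Q1_st : stiefel Q1.
  by rewrite Q1E; case: svdM => U_st [_ [_ [_ [V_orth _]]]]; apply: stiefel_polar.
have XP1 : X *m P1 = b *: (M - Q0).
  by rewrite /M addrC addKr scalerA divff ?gt_eqF // scale1r.
split; first by rewrite Psi_feasible.
move=> eps eps_gt0; exists (Num.min 1 (eps / b)).
split; first by rewrite lt_min ltr01 divr_gt0.
move=> [[Y0 Y1] Y2]; rewrite lt_min => /andP[t_lt1 t_lt].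
set t := tnorm _ in t_lt1 t_lt.
have t_ge0 : 0 <= t by apply: sqrtr_ge0.
have t2 := tnorm_sqr (tsub ((Y0, Y1), Y2) ((P1, Q1), Q0)); rewrite -/t /= in t2.
have := fro2_ge0 (Y0 - P1); have := fro2_ge0 (Y1 - Q1); have := fro2_ge0 (Y2 - Q0).
move=> ge0_Y2 ge0_Y1 ge0_Y0.
rewrite Psi_feasible // /Psi.
case: (pselect (binmx Y0 /\ stiefel Y1)) => [[Y0_bin Y1_st]|Y_infeas]; last first.
  by rewrite asboolF // leey.
rewrite asboolT //.
have Y0E : Y0 = P1 by apply: binmx_locally_constant => //; nra.
subst Y0; rewrite -EFinD lee_fin /tinner /= -/t minner0l add0r !minnerZl.
set D := Y1 - Q1; set D' := Y2 - Q0.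
have normal : minner D (M - Q1) <= fro2 D / 2.
  by rewrite /D Q1E; apply: stiefel_prox_normal svdM Y1_st.
have XY1 : minner P1 (X^T *m Y1) = minner P1 (X^T *m Q1) + b * minner D (M - Q0).
  rewrite -(subrK Q1 Y1) -/D mulmxDr [minner P1 _]minnerDr minner_adjoint XP1.
  by rewrite minnerZl (minnerC D) addrC.
have Y12 : Y1 - Y2 = (Q1 - Q0) + (D - D').
  by apply/matrixP => i j; rewrite /D /D' !mxE; ring.
have MD : minner D (M - Q0) = minner D (M - Q1) + minner (Q1 - Q0) D.
  rewrite [minner D (M - Q0)]minnerBr [minner D (M - Q1)]minnerBr.
  by rewrite [minner (Q1 - Q0) D]minnerBl (minnerC Q1 D) (minnerC Q0 D); ring.
rewrite XY1 Y12 [fro2 (_ + (D - D'))]fro2D MD [minner _ (D - D')]minnerBr.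
have bt : b * t <= eps by rewrite -ler_pdivlMl // mulrC ltW.
have bD : b * fro2 D <= b * t ^+ 2.
  by apply: ler_wpM2l; [exact: ltW | rewrite t2 /D; lra].
(* b <D, M - Q1> <= b |D|^2 / 2 <= b t^2 / 2 <= eps t / 2 *)
have := ler_wpM2l (ltW b_gt0) normal; have := ler_wpM2r t_ge0 bt.
have := mulr_ge0 blo_ge0 (fro2_ge0 (D - D'));
have := mulr_ge0 (ltW eps_gt0) t_ge0; lra.
Qed.

Section Iteration.
Context {R : realType} {d n K : nat} {X : 'M[R]_(d, n)}.
Context {alpha beta gamma : nat -> R} {alo ahi blo bhi : R}.
Context {P : nat -> 'M[R]_(n, K)} {Q : nat -> 'M[R]_(d, K)}.
Hypotheses (K_gt0 : (1 <= K)%N) (K_le_n : (K <= n)%N).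
Hypotheses (alo_gt0 : 0 < alo) (blo_gt0 : 0 < blo) (bhi_gt0 : 0 < bhi).
Hypothesis alpha_bnd : forall k, alo <= alpha k <= ahi.
Hypothesis beta_bnd : forall k, 3 * blo / 2 <= beta k <= bhi.
Hypothesis gamma_bnd : forall k, 0 <= gamma k < gamma_star X alo blo.
Hypotheses (P0_bin : binmx (P 0%N)) (Q0_st : stiefel (Q 0%N)).
Hypothesis P_step : forall k i j,
  in_sign ((P k + (alpha k)^-1 *:
              (X^T *m (Q k + gamma k *: (Q k - Qprev Q k)))) i j) (P k.+1 i j).
Hypothesis Q_step : forall k, exists (U : 'M[R]_(d, K)) (S V : 'M[R]_K),
  thin_svd (Q k + (beta k)^-1 *: (X *m P k.+1)) U S V /\ Q k.+1 = U *m V^T.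

Let n_gt0 : (0 < n)%N. Proof. exact: leq_trans K_gt0 K_le_n. Qed.

Let alpha_gt0 k : 0 < alpha k.
Proof. by case/andP: (alpha_bnd k) => + _; apply: lt_le_trans. Qed.

Let beta_gt0 k : 0 < beta k.
Proof. by case/andP: (beta_bnd k) => + _; apply: lt_le_trans; rewrite divr_gt0 ?mulr_gt0. Qed.

Lemma sign_step_increase k : binmx (P k) ->
  binmx (P k.+1) /\
  alpha k / 2 * fro2 (P k.+1 - P k)
    <= minner (P k.+1 - P k) (X^T *m (Q k + gamma k *: (Q k - Qprev Q k))).
Proof.
move=> Pk_bin; have [Pk1_bin incr] := sign_maximizes Pk_bin (P_step k).
split => //; apply: (maximizer_sufficient_increase (alpha_gt0 k) _ incr).
by rewrite !binmx_fro2.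
Qed.

Lemma polar_step_increase k : stiefel (Q k) ->
  stiefel (Q k.+1) /\
  beta k / 2 * fro2 (Q k.+1 - Q k) <= minner (Q k.+1 - Q k) (X *m P k.+1).
Proof.
move=> Qk_st; have [U [S [V [svdM Qk1E]]]] := Q_step k.
have Qk1_st : stiefel (Q k.+1).
  by rewrite Qk1E; case: svdM => U_st [_ [_ [_ [V_orth _]]]]; apply: stiefel_polar.
split => //; apply: (maximizer_sufficient_increase (beta_gt0 k)).
  by rewrite !stiefel_fro2.
by rewrite Qk1E; apply: polar_maximizes svdM Qk_st.
Qed.

Lemma iterate_feasible k : binmx (P k) /\ stiefel (Q k).
Proof.
elim: k => [|k [Pk_bin Qk_st]] //; split.
- by have [] := sign_step_increase k Pk_bin.
- by have [] := polar_step_increase k Qk_st.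
Qed.

Lemma Qprev_stiefel k : stiefel (Qprev Q k).
Proof. by case: k => [|k] //=; have [] := iterate_feasible k. Qed.

Lemma Citer_bounded : exists M, forall k, tnorm (Citer P Q k) <= M.
Proof.
exists (Num.sqrt ((n * K)%:R + K%:R + K%:R)) => k.
have [Pk_bin Qk_st] := iterate_feasible k; have Qk'_st := Qprev_stiefel k.
by rewrite /tnorm /Citer /= binmx_fro2 // !stiefel_fro2.
Qed.

Lemma Psi_sufficient_decrease k :
  (Psi X blo (Citer P Q k.+1) - Psi X blo (Citer P Q k)
   <= (- (Num.min alo blo / 8 *
          tnorm (tsub (Citer P Q k.+1) (Citer P Q k)) ^+ 2))%:E)%E.
Proof.
have [Pk_bin Qk_st] := iterate_feasible k.
have [Pk1_bin Qk1_st] := iterate_feasible k.+1.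
have [_ incrP] := sign_step_increase k Pk_bin.
have [_ incrQ] := polar_step_increase k Qk_st.
have /andP[gamma_ge0 _] := gamma_bnd k.
have cross := inertial_cross_le X n_gt0 (P k.+1 - P k) (Q k - Qprev Q k)
  alo_gt0 blo_gt0 gamma_ge0 (gamma_star_sqr_le X n_gt0 alo_gt0 blo_gt0 (gamma_bnd k)).
rewrite mulmxDr -scalemxAr minnerDr minnerZr in incrP.
have coupling : minner (P k.+1) (X^T *m Q k.+1) - minner (P k) (X^T *m Q k)
    = minner (Q k.+1 - Q k) (X *m P k.+1) + minner (P k.+1 - P k) (X^T *m Q k).
  by rewrite (minnerC (Q k.+1 - Q k)) -minner_adjoint mulmxBr minnerBr minnerBl; ring.
rewrite /Citer /= !Psi_feasible // -EFinB lee_fin tnorm_sqr /=.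
(* the increment is at most -alo/8 |P' - P|^2 - blo/4 |Q' - Q|^2 - blo/6 |Q - Q_|^2 *)
have /andP[alpha_ge _] := alpha_bnd k; have /andP[beta_ge _] := beta_bnd k.
have kappa_le_alo : Num.min alo blo <= alo by rewrite ge_min lexx.
have kappa_le_blo : Num.min alo blo <= blo by rewrite ge_min lexx orbT.
have := ler_wpM2r (fro2_ge0 (P k.+1 - P k)) alpha_ge.
have := ler_wpM2r (fro2_ge0 (Q k.+1 - Q k)) beta_ge.
have := ler_wpM2r (fro2_ge0 (P k.+1 - P k)) kappa_le_alo.
have := ler_wpM2r (fro2_ge0 (Q k.+1 - Q k)) kappa_le_blo.
have := ler_wpM2r (fro2_ge0 (Q k - Qprev Q k)) kappa_le_blo.
have := mulr_ge0 (ltW blo_gt0) (fro2_ge0 (Q k.+1 - Q k)).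
have := mulr_ge0 (ltW blo_gt0) (fro2_ge0 (Q k - Qprev Q k)).
lra.
Qed.

Lemma Psi_subgradient_bound k :
  (dist0 (lsubdiff (Psi X blo) (Citer P Q k.+1))
   <= ((bhi + blo) * tnorm (tsub (Citer P Q k.+1) (Citer P Q k)))%:E)%E.
Proof.
have [Pk1_bin _] := iterate_feasible k.+1.
have [U [S [V [svdM Qk1E]]]] := Q_step k.
have := Psi_frechet_polar_step X (ltW blo_gt0) (beta_gt0 k) Pk1_bin svdM Qk1E.
move=> /frechet_lsubdiff /dist0_le /le_trans; apply; rewrite lee_fin.
have c_ge0 : 0 <= bhi + blo by rewrite addr_ge0 ?ltW.
rewrite /tnorm -(ger0_norm c_ge0) -sqrtr_sqr -sqrtrM ?sqr_ge0 // ler_sqrt; last first.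
  by rewrite mulr_ge0 ?sqr_ge0 // !addr_ge0 ?fro2_ge0.
rewrite /= !fro2Z [fro2 0]fro2_minner minner0l add0r -mulrDl.
have /andP[beta_ge beta_le] := beta_bnd k.
have coef : (blo - beta k) ^+ 2 + (- blo) ^+ 2 <= (bhi + blo) ^+ 2.
  have beta_le' : 0 <= bhi - beta k by rewrite subr_ge0.
  have beta_ge' : 0 <= beta k - 3 * blo / 2 by rewrite subr_ge0.
  have := mulr_ge0 beta_le' (addr_ge0 (ltW bhi_gt0) (ltW (beta_gt0 k))).
  have := mulr_ge0 (ltW blo_gt0) beta_ge'; have := mulr_ge0 (ltW bhi_gt0) (ltW blo_gt0).
  have := sqr_ge0 blo; lra.
have := ler_wpM2r (fro2_ge0 (Q k.+1 - Q k)) coef.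
have := mulr_ge0 (sqr_ge0 (bhi + blo)) (addr_ge0 (fro2_ge0 (P k.+1 - P k)) (fro2_ge0 (Q k - Qprev Q k))).
lra.
Qed.

End Iteration.

Theorem proposition6 (R : realType) (d n K : nat) (X : 'M[R]_(d, n))
  (alpha beta gamma : nat -> R) (alo ahi blo bhi : R)
  (P : nat -> 'M[R]_(n, K)) (Q : nat -> 'M[R]_(d, K)) :
  (1 <= K)%N -> (K <= n)%N -> (K <= d)%N ->
  0 < alo -> 0 < ahi -> 0 < blo -> 0 < bhi ->
  (forall k, alo <= alpha k <= ahi) ->
  (forall k, 3 * blo / 2 <= beta k <= bhi) ->
  (forall k, 0 <= gamma k < gamma_star X alo blo) ->
  binmx (P 0%N) -> stiefel (Q 0%N) ->
  (forall k i j,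
     in_sign ((P k + (alpha k)^-1 *:
                 (X^T *m (Q k + gamma k *: (Q k - Qprev Q k)))) i j)
             (P k.+1 i j)) ->
  (forall k, exists (U : 'M[R]_(d, K)) (S V : 'M[R]_K),
     thin_svd (Q k + (beta k)^-1 *: (X *m P k.+1)) U S V /\
     Q k.+1 = U *m V^T) ->
  [/\ (exists M : R, forall k, tnorm (Citer P Q k) <= M),
      (exists kappa1 : R, 0 < kappa1 /\ forall k,
         (Psi X blo (Citer P Q k.+1) - Psi X blo (Citer P Q k)
          <= (- (kappa1 * tnorm (tsub (Citer P Q k.+1) (Citer P Q k)) ^+ 2))%:E)%E)
    & (exists kappa2 : R, 0 < kappa2 /\ forall k,
         (dist0 (lsubdiff (Psi X blo) (Citer P Q k.+1))
          <= (kappa2 * tnorm (tsub (Citer P Q k.+1) (Citer P Q k)))%:E)%E)].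
Proof.
move=> K_gt0 K_le_n _ alo_gt0 _ blo_gt0 bhi_gt0 alpha_bnd beta_bnd gamma_bnd
  P0_bin Q0_st P_step Q_step.
split.
- exact: Citer_bounded alo_gt0 blo_gt0 alpha_bnd beta_bnd P0_bin Q0_st P_step Q_step.
- exists (Num.min alo blo / 8); split; first by rewrite divr_gt0 // lt_min alo_gt0.
  exact: Psi_sufficient_decrease K_gt0 K_le_n alo_gt0 blo_gt0 alpha_bnd beta_bnd
    gamma_bnd P0_bin Q0_st P_step Q_step.
- exists (bhi + blo); split; first by rewrite addr_gt0.
  exact: Psi_subgradient_bound alo_gt0 blo_gt0 bhi_gt0 alpha_bnd beta_bnd
    P0_bin Q0_st P_step Q_step.
Qed.
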